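(* Let $q=4f+1$ be a prime, $\alpha$ a generator of $\mathbb Z_q^*$, and $D_k=\{\alpha^{4i+k}:i=0,1,\dots,f-1\}$ for $k=0,1,2,3$. Put $\mathfrak D_0=D_0\cup D_2$ and $\mathfrak D_1=D_1\cup D_3$, and let $\zeta_4\in\mathbb C$ be a primitive $4$th root of unity. Define the sequence $\underline a=(a_0,a_1,\dots,a_{q-1},\dots)$ of period $q$ by $a_i=\zeta_4^k$ if $i\in\mathfrak D_k$ ($k=0,1$) and $a_0=0$. Then $\underline a$ is an almost quaternary nearly perfect sequence of type $\frac{q-3}{2}$ with one zero-symbol, i.e. $C_{\underline a}(t)=\frac{q-3}{2}$ for all $1\le t\le q-1$.
   Context: $C_{\underline a}(t)=\sum_{i=0}^{q-1}a_i\overline{a_{i+t}}$, indices modulo $q$, bar denoting complex conjugation. *)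

From HB Require Import structures.
From mathcomp Require Import all_boot all_order all_algebra all_field.
Set Implicit Arguments. Unset Strict Implicit. Unset Printing Implicit Defensive.
Import Order.TTheory GRing.Theory Num.Theory.
Local Open Scope ring_scope.

Definition cyc_class (q f : nat) (alpha : 'F_q) (k : nat) : {set 'F_q} :=
  [set alpha ^+ (4 * i + k)%N | i : 'I_f].

Definition seq_a (q f : nat) (alpha : 'F_q) (zeta : algC) (i : nat) : algC :=
  let x : 'F_q := i%:R in
  if x \in cyc_class f alpha 0 :|: cyc_class f alpha 2 then 1
  else if x \in cyc_class f alpha 1 :|: cyc_class f alpha 3 then zeta
  else 0.

Definition autocorr (q : nat) (a : nat -> algC) (t : nat) : algC :=
  \sum_(i < q) a i * (a ((i + t) %% q)%N)^*.

(* On the nonzero elements of F_q, D_0 ∪ D_2 is the set of squares and D_1 ∪ D_3 the set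
   of non-squares, so a_x = u_x + zeta v_x with u = (n + chi)/2, v = (n - chi)/2, where chi
   is the quadratic character and n the indicator of x <> 0.  Since zeta^* = -zeta and
   zeta^2 = -1, a_x (a_{x+t})^* = (n_x n_{x+t} + chi_x chi_{x+t})/2
   + zeta (n_x chi_{x+t} - chi_x n_{x+t})/2.  Summing over x, the real part is
   ((q - 2) + (-1))/2 by the classical correlation sum of chi, and the imaginary part is
   (chi(-t) - chi(t))/2 = 0 because -1 is a square when q = 1 mod 4. *)
From HB Require Import structures.
From mathcomp Require Import all_boot all_order all_algebra all_field.
From mathcomp Require Import ring zify.
Set Implicit Arguments. Unset Strict Implicit. Unset Printing Implicit Defensive.
Import Order.TTheory GRing.Theory Num.Theory.
Local Open Scope ring_scope.

Lemma expf_card_pred (F : finFieldType) (x : F) : x != 0 -> x ^+ #|F|.-1 = 1.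
Proof.
move=> nz_x; apply: (mulIf nz_x).
by rewrite mul1r -exprSr prednK ?expf_card // (ltn_trans _ (card_finNzRing_gt1 F)).
Qed.

Lemma sum_neq_mul (T : finType) (R : pzRingType) (a : T) (G : T -> R) :
  \sum_x (x != a)%:R * G x = \sum_x G x - G a.
Proof.
rewrite [in LHS](bigD1 a) //= eqxx mul0r add0r [in RHS](bigD1 a) //= addrC addrK.
by apply: eq_bigr => x ->; rewrite mul1r.
Qed.

Lemma sum_neq (T : finType) (R : pzRingType) (a : T) :
  \sum_x ((x != a)%:R : R) = #|T|%:R - 1.
Proof.
under eq_bigr do rewrite -[_%:R]mulr1.
by rewrite sum_neq_mul sumr_const.
Qed.

Lemma prim_root_neq0 (R : nzRingType) (n : nat) (z : R) : n.-primitive_root z -> z != 0.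
Proof.
move=> z_prim; apply/eqP => z0; have := prim_expr_order z_prim.
by rewrite z0 expr0n eqn0Ngt (prim_order_gt0 z_prim) => /eqP; rewrite eq_sym oner_eq0.
Qed.

Lemma prim_root_expr_half (R : idomainType) (n : nat) (z : R) :
  (n.*2).-primitive_root z -> z ^+ n = -1.
Proof.
move=> z_prim; have n_gt0 : (0 < n)%N by have := prim_order_gt0 z_prim; rewrite double_gt0.
have : (z ^+ n) ^+ 2 == 1 by rewrite -exprM muln2 prim_expr_order.
have n_lt : (n < n.*2)%N by rewrite -addnn; lia.
by rewrite sqrf_eq1 -(prim_order_dvd z_prim) gtnNdvd //= => /eqP.
Qed.

Lemma sum_ord_Fp (p : nat) (R : nmodType) (G : 'F_p -> R) :
  prime p -> \sum_(i < p) G i%:R = \sum_x G x.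
Proof.
move=> p_prime.
have inj_nat : injective (fun i : 'I_p => (i%:R : 'F_p)).
  by move=> i j /(congr1 val); rewrite /= !val_Fp_nat // !modn_small // => /val_inj.
have bij_nat := inj_card_bij inj_nat (eq_leq (etrans (card_Fp p_prime) (esym (card_ord p)))).
by rewrite (reindex _ (onW_bij _ bij_nat)).
Qed.

Section QuadraticCharacter.

Variables (F : finFieldType) (m : nat).
Hypothesis cardF : #|F| = (2 * m).+1.

Definition qchar (x : F) : algC :=
  if x == 0 then 0 else if x ^+ m == 1 then 1 else -1.

Lemma expr2m_eq1 (x : F) : x != 0 -> x ^+ (2 * m) = 1.
Proof. by rewrite (pred_Sn (2 * m)) -cardF; apply: expf_card_pred. Qed.

Lemma exprm_eqN1 (x : F) : x != 0 -> x ^+ m != 1 -> x ^+ m = -1.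
Proof.
move=> nz_x ne1; apply/eqP; move: ne1; apply: contraNT => neN1.
have : (x ^+ m) ^+ 2 == 1 by rewrite -exprM mulnC expr2m_eq1.
by rewrite sqrf_eq1 (negbTE neN1) orbF.
Qed.

Lemma qchar0 : qchar 0 = 0.
Proof. by rewrite /qchar eqxx. Qed.

Lemma qchar1 : qchar 1 = 1.
Proof. by rewrite /qchar oner_eq0 expr1n eqxx. Qed.

Lemma conj_qchar (x : F) : (qchar x)^* = qchar x.
Proof.
rewrite /qchar; case: ifP => _; first exact: rmorph0.
by case: ifP => _; [exact: rmorph1 | exact: rmorphN1].
Qed.

Lemma qcharM (x y : F) : qchar (x * y) = qchar x * qchar y.
Proof.
rewrite /qchar mulf_eq0 exprMn.
have [-> | nz_x] := eqVneq x 0; first by rewrite mul0r.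
have [-> | nz_y] := eqVneq y 0; first by rewrite orbT mulr0.
rewrite /=; have [ex | ex] := eqVneq (x ^+ m) 1; have [ey | ey] := eqVneq (y ^+ m) 1.
- by rewrite ex ey mulr1 eqxx mulr1.
- by rewrite ex mul1r (negbTE ey) mul1r.
- by rewrite ey mulr1 (negbTE ex) mulr1.
- by rewrite (exprm_eqN1 nz_x ex) (exprm_eqN1 nz_y ey) mulrNN mulr1 eqxx mulrNN mulr1.
Qed.

Lemma qchar_sqr (x : F) : x != 0 -> qchar (x * x) = 1.
Proof.
by move=> nz_x; rewrite /qchar mulf_eq0 (negbTE nz_x) /= -expr2 -exprM expr2m_eq1 ?eqxx.
Qed.

Lemma qcharN (x : F) : ~~ odd m -> qchar (- x) = qchar x.
Proof.
move=> even_m; rewrite -mulN1r qcharM /qchar oppr_eq0 oner_eq0 -signr_odd.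
by rewrite (negbTE even_m) expr0 eqxx mul1r.
Qed.

Lemma exists_nonresidue : exists g : F, qchar g = -1.
Proof.
have m_gt0 : (0 < m)%N by have := card_finNzRing_gt1 F; rewrite cardF; lia.
have [/existsP[g /andP[nz_g ng1]] | none] := boolP [exists g : F, (g != 0) && (g ^+ m != 1)].
  by exists g; rewrite /qchar (negbTE nz_g) (negbTE ng1).
have : (size (enum (predC1 (0 : F)%R)) <= m)%N.
  apply: max_unity_roots => //; last exact: enum_uniq.
  apply/allP => x; rewrite mem_enum inE => nz_x; rewrite unity_rootE.
  by move: none; rewrite negb_exists => /forallP/(_ x); rewrite nz_x negbK.
by rewrite -cardE cardC1 cardF /=; lia.
Qed.

Lemma sum_qchar : \sum_x qchar x = 0.
Proof.
have [g qchar_g] := exists_nonresidue.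
have nz_g : g != 0.
  by apply: contra_eqN qchar_g => /eqP->; rewrite qchar0 eq_sym oppr_eq0 oner_eq0.
have : \sum_x qchar x = - \sum_x qchar x.
  rewrite {1}(reindex_inj (mulfI nz_g)) /=.
  by under eq_bigr do rewrite qcharM qchar_g mulN1r; rewrite sumrN.
by move/eqP; rewrite -addr_eq0 -mulr2n mulrn_eq0 => /eqP.
Qed.

Lemma sum_qchar_mulD (t : F) : t != 0 -> \sum_x qchar x * qchar (x + t) = -1.
Proof.
move=> nz_t.
have qchar_prod x : qchar x * qchar (x + t) = (x != 0)%:R * qchar (1 + t / x).
  have [-> | nz_x] := eqVneq x 0; first by rewrite qchar0 !mul0r.
  rewrite mul1r -qcharM (_ : x * (x + t) = x * x * (1 + t / x)); last by field.
  by rewrite qcharM qchar_sqr // mul1r.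
have inj_inv : injective (fun x : F => 1 + t / x) by move=> x y /addrI/(mulfI nz_t)/invr_inj.
under eq_bigr do rewrite qchar_prod.
rewrite sum_neq_mul invr0 mulr0 addr0 qchar1.
have -> : \sum_x qchar (1 + t / x) = \sum_x qchar x by rewrite [RHS](reindex_inj inj_inv).
by rewrite sum_qchar sub0r.
Qed.

End QuadraticCharacter.

Section QuaternarySequence.

Variables (F : finFieldType) (m : nat) (zeta : algC).
Hypotheses (cardF : #|F| = (2 * m).+1) (zeta_sqr : zeta ^+ 2 = -1).

Definition quaternary_seq (x : F) : algC :=
  if x == 0 then 0 else if x ^+ m == 1 then 1 else zeta.

Lemma conj_zeta : zeta^* = - zeta.
Proof.
have zeta_conj : zeta * zeta^* = 1 by rewrite -normCK -normrX zeta_sqr normrN1.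
by rewrite -[zeta^*]mul1r -[1]opprK -zeta_sqr expr2 mulNr -mulrA zeta_conj mulr1.
Qed.

Lemma quaternary_seqE (x : F) :
  quaternary_seq x = ((x != 0)%:R + qchar m x) / 2 + zeta * (((x != 0)%:R - qchar m x) / 2).
Proof.
rewrite /quaternary_seq /qchar.
by case: (x == 0); [|case: (x ^+ m == 1)]; rewrite /=; field.
Qed.

Lemma conj_quaternary_seq (x : F) :
  (quaternary_seq x)^* = ((x != 0)%:R + qchar m x) / 2 - zeta * (((x != 0)%:R - qchar m x) / 2).
Proof.
rewrite /quaternary_seq /qchar; case: (x == 0) => /=; first by rewrite rmorph0; field.
by case: (x ^+ m == 1) => /=; rewrite ?rmorph1 ?conj_zeta; field.
Qed.

Lemma quaternary_seq_mul_conj (x y : F) :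
  quaternary_seq x * (quaternary_seq y)^* =
  ((x != 0)%:R * (y != 0)%:R + qchar m x * qchar m y
   + zeta * ((x != 0)%:R * qchar m y - qchar m x * (y != 0)%:R)) / 2.
Proof.
by rewrite quaternary_seqE conj_quaternary_seq; field: zeta_sqr.
Qed.

Lemma sum_quaternary_seq_autocorr (t : F) : ~~ odd m -> t != 0 ->
  \sum_x quaternary_seq x * (quaternary_seq (x + t))^* = (#|F|%:R - 3) / 2.
Proof.
move=> even_m nz_t.
have shiftE (G : F -> algC) : \sum_x G (x + t) = \sum_x G x.
  by rewrite [RHS](reindex_inj (addIr t)).
have nzE x : (x + t != 0) = (x != - t) by rewrite addr_eq0.
have sum_nn : \sum_x ((x != 0)%:R * (x + t != 0)%:R : algC) = #|F|%:R - 2.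
  under eq_bigr do rewrite nzE mulrC.
  by rewrite sum_neq_mul sum_neq oppr_eq0 nz_t /=; ring.
have sum_nc : \sum_x (x != 0)%:R * qchar m (x + t) = - qchar m t.
  by rewrite sum_neq_mul shiftE sum_qchar // !add0r.
have sum_cn : \sum_x qchar m x * (x + t != 0)%:R = - qchar m t.
  under eq_bigr do rewrite nzE mulrC.
  by rewrite sum_neq_mul sum_qchar // qcharN // sub0r.
under eq_bigr do rewrite quaternary_seq_mul_conj.
rewrite -mulr_suml big_split -mulr_sumr sumrB !big_split /=.
by rewrite sum_nn sum_qchar_mulD // sum_nc sum_cn subrr mulr0 addr0; ring.
Qed.

End QuaternarySequence.

Section CyclotomicClasses.

Variables (q f : nat) (alpha : 'F_q).
Hypotheses (cardF : #|'F_q| = (4 * f).+1) (alpha_prim : (4 * f).-primitive_root alpha).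

Lemma cyc_class_neq0 (c : nat) (x : 'F_q) : x \in cyc_class f alpha c -> x != 0.
Proof. by case/imsetP => i _ ->; rewrite expf_neq0 // (prim_root_neq0 alpha_prim). Qed.

Lemma cyc_class_expr (c : nat) (x : 'F_q) :
  x \in cyc_class f alpha c -> (x ^+ (2 * f) == 1) = ~~ odd c.
Proof.
case/imsetP => i _ ->; rewrite -exprM -(prim_order_dvd alpha_prim).
have -> : (4 * f = 2 * (2 * f))%N by rewrite mulnA.
have f_gt0 : (0 < f)%N by have := prim_order_gt0 alpha_prim; rewrite muln_gt0.
by rewrite dvdn_pmul2r ?muln_gt0 ?f_gt0 // dvdn2 oddD oddM.
Qed.

Lemma cyc_class_cover (x : 'F_q) : x != 0 -> exists2 c, (c < 4)%N & x \in cyc_class f alpha c.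
Proof.
move=> nz_x.
have x_pow : x ^+ (4 * f) = 1 by rewrite (pred_Sn (4 * f)) -cardF expf_card_pred.
have [[k /= k_lt4f] ->] := prim_rootP alpha_prim x_pow.
exists (k %% 4)%N; first by rewrite ltn_mod.
have k_lt : (k %/ 4 < f)%N by rewrite ltn_divLR // mulnC.
by apply/imsetP; exists (Ordinal k_lt) => //=; rewrite {1}(divn_eq k 4) mulnC.
Qed.

Lemma mem_cyc_class02 (x : 'F_q) :
  (x \in cyc_class f alpha 0 :|: cyc_class f alpha 2) = (x != 0) && (x ^+ (2 * f) == 1).
Proof.
apply/idP/andP => [/setUP[] /[dup] xD /cyc_class_neq0 -> | [nz_x]].
- by rewrite (cyc_class_expr xD).
- by rewrite (cyc_class_expr xD).
have [c c_lt4 xD] := cyc_class_cover nz_x; rewrite (cyc_class_expr xD).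
by move: c_lt4 xD; case: c => [|[|[|[|c]]]] //= _ xD _; rewrite inE xD ?orbT.
Qed.

Lemma mem_cyc_class13 (x : 'F_q) :
  (x \in cyc_class f alpha 1 :|: cyc_class f alpha 3) = (x != 0) && (x ^+ (2 * f) != 1).
Proof.
apply/idP/andP => [/setUP[] /[dup] xD /cyc_class_neq0 -> | [nz_x]].
- by rewrite (cyc_class_expr xD).
- by rewrite (cyc_class_expr xD).
have [c c_lt4 xD] := cyc_class_cover nz_x; rewrite (cyc_class_expr xD) negbK.
by move: c_lt4 xD; case: c => [|[|[|[|c]]]] //= _ xD _; rewrite inE xD ?orbT.
Qed.

Lemma seq_aE (zeta : algC) (n : nat) :
  seq_a f alpha zeta n = quaternary_seq (2 * f) zeta (n%:R : 'F_q).
Proof.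
rewrite /seq_a /quaternary_seq mem_cyc_class02 mem_cyc_class13.
by case: (_ == 0); case: (_ == 1).
Qed.

End CyclotomicClasses.

Theorem theorem4 (q f : nat) (alpha : 'F_q) (zeta : algC) :
  prime q -> q = (4 * f + 1)%N ->
  (q.-1).-primitive_root alpha ->
  4.-primitive_root zeta ->
  forall t : nat, (1 <= t <= q.-1)%N ->
    autocorr q (seq_a f alpha zeta) t = (q%:R - 3) / 2.
Proof.
move=> q_prime q_eq alpha_prim zeta_prim t /andP[t_gt0 t_le].
have cardF : #|'F_q| = (4 * f).+1 by rewrite card_Fp // q_eq addn1.
have cardF2 : #|'F_q| = (2 * (2 * f)).+1 by rewrite mulnA.
have alpha_prim4 : (4 * f).-primitive_root alpha.
  by rewrite -[(4 * f)%N]/((4 * f).+1.-1) -addn1 -q_eq.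
have zeta_sqr : zeta ^+ 2 = -1 := prim_root_expr_half (n := 2) zeta_prim.
have nz_t : (t%:R : 'F_q) != 0.
  rewrite -unitfE unitFpE // prime_coprime // gtnNdvd //.
  by move: t_le; rewrite q_eq addn1 /=; lia.
have seq_shift (i : nat) :
    seq_a f alpha zeta ((i + t) %% q) = quaternary_seq (2 * f) zeta (i%:R + t%:R : 'F_q).
  by rewrite (seq_aE cardF alpha_prim4) (Fp_nat_mod q_prime) natrD.
rewrite /autocorr.
under eq_bigr do rewrite seq_shift (seq_aE cardF alpha_prim4).
rewrite (sum_ord_Fp (fun x =>
  quaternary_seq (2 * f) zeta x * (quaternary_seq (2 * f) zeta (x + t%:R))^*)) //.
by rewrite (sum_quaternary_seq_autocorr cardF2) ?oddM ?card_Fp.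
Qed.
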